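(* Let $\omega\in\mathbb Z\setminus\{0\}$, $\kappa=2\pi\omega$, $L^2_0=\{u\in L^2(\mathbb R/\mathbb Z):\int_0^1u=0\}$, and for $u\in L^2_0$ let $\mathscr Pu$ be the unique mean-zero primitive ($(\mathscr Pu)_s=u$, $\int_0^1\mathscr Pu=0$). Define the closure map $\mathscr C:L^2_0\to\mathbb C$, $\mathscr C(u)=\int_0^1\exp(i(\kappa s+\mathscr Pu(s)))\,ds$. If $u\in L^2_0$ satisfies $\mathscr C(u)=0$, then $D\mathscr C(u):L^2_0\to\mathbb C$, given by $D\mathscr C(u)[w]=i\int_0^1e^{i(\kappa s+\mathscr Pu(s))}\mathscr Pw(s)\,ds$, is surjective as a real-linear map onto $\mathbb C\cong\mathbb R^2$.
   Context: $\mathscr C(u)=0$ is precisely the condition that the curvature $k=\kappa+u$ reconstructs a closed unit-length curve (with tangent $e^{i(\kappa s+\mathscr Pu)}$) of turning number $\omega$. *)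

From HB Require Import structures.
From mathcomp Require Import all_boot all_order all_algebra.
From mathcomp Require Import all_classical all_reals all_analysis.
Set Implicit Arguments. Unset Strict Implicit. Unset Printing Implicit Defensive.
Import Order.TTheory GRing.Theory Num.Theory.
Local Open Scope classical_set_scope.
Local Open Scope ring_scope.

Section ClosureDefs.
Variable R : realType.

(* One period [0,1] of R/Z; functions on R/Z are represented by their values on [0,1]. *)
Definition I01 : set R := `[0%R, 1%R]%classic.

Definition L2_0 (u : R -> R) : Prop :=
  measurable_fun I01 u /\
  (@lebesgue_measure R).-integrable I01 (fun x => ((u x) ^+ 2)%:E) /\
  Rintegral (@lebesgue_measure R) I01 u = 0.

Definition prim (u : R -> R) (s : R) : R :=
  Rintegral (@lebesgue_measure R) `[0%R, s]%classic u.

Definition Pmz (u : R -> R) (s : R) : R :=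
  prim u s - Rintegral (@lebesgue_measure R) I01 (prim u).

Definition phase (omega : int) (u : R -> R) (s : R) : R :=
  2 * pi * omega%:~R * s + Pmz u s.

Definition closure_map (omega : int) (u : R -> R) : R * R :=
  (Rintegral (@lebesgue_measure R) I01 (fun s => cos (phase omega u s)),
   Rintegral (@lebesgue_measure R) I01 (fun s => sin (phase omega u s))).

(* DC(u)[w] = i int_0^1 exp(i (kappa s + P u s)) P w (s) ds, as (Re, Im):
   Re = - int sin(phase) Pw,  Im = int cos(phase) Pw. *)
Definition dclosure_map (omega : int) (u w : R -> R) : R * R :=
  (- Rintegral (@lebesgue_measure R) I01 (fun s => sin (phase omega u s) * Pmz w s),
   Rintegral (@lebesgue_measure R) I01 (fun s => cos (phase omega u s) * Pmz w s)).

End ClosureDefs.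

From HB Require Import structures.
From mathcomp Require Import all_boot all_order all_algebra.
From mathcomp Require Import all_classical all_reals all_analysis.
From mathcomp Require Import measurable_realfun ring lra.
Set Implicit Arguments. Unset Strict Implicit. Unset Printing Implicit Defensive.
Import Order.TTheory GRing.Theory Num.Theory.
Import numFieldNormedType.Exports.
Local Open Scope classical_set_scope.
Local Open Scope ring_scope.

(* For a direction (p, q) <> 0 put g := q cos phi - p sin phi, where
   phi s = kappa s + P u s.  The closure condition C(u) = 0 says exactly that g
   has mean zero, so w := P g is admissible; as P is skew-adjoint on mean-zero
   functions, p Re DC(u)[w] + q Im DC(u)[w] = <P w, g> = - <P g, w> = - ||w||^2.
   If this vanished, w and hence g = w' would vanish on (0, 1).  But phi grows
   by 2 pi omega <> 0 across [0, 1], so it takes two values y and y + pi / 2,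
   and g cannot vanish at both: the squares of the two values add up to
   p^2 + q^2.  So the image of DC(u) lies in no line through 0, and a linear
   map with this property is onto R^2. *)

Section onto_R2.
Variables (R : fieldType) (V : lmodType R) (S : set V) (T : V -> R * R).
Hypothesis S_lincomb : forall a b f g, S f -> S g -> S (a *: f + b *: g).
Hypothesis T_lincomb : forall a b f g, S f -> S g ->
  T (a *: f + b *: g) = (a * (T f).1 + b * (T g).1, a * (T f).2 + b * (T g).2).
Hypothesis T_nondegenerate : forall p q : R, (p != 0) || (q != 0) ->
  exists2 f, S f & p * (T f).1 + q * (T f).2 != 0.

Lemma onto_R2 z : exists2 f, S f & T f = z.
Proof.
have [|f1 Sf1] := @T_nondegenerate 0 1; first by rewrite oner_neq0 orbT.
rewrite mul0r add0r mul1r => Tf1_neq0.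
have [|f2 Sf2 det_neq0] := @T_nondegenerate (- (T f1).2) (T f1).1.
  by rewrite oppr_eq0 Tf1_neq0.
(* T f1 and T f2 form a basis of R^2: solve for z by Cramer's rule. *)
pose D := (T f1).1 * (T f2).2 - (T f1).2 * (T f2).1.
exists (((z.1 * (T f2).2 - z.2 * (T f2).1) / D) *: f1 +
        (((T f1).1 * z.2 - (T f1).2 * z.1) / D) *: f2); first exact: S_lincomb.
rewrite T_lincomb // {}/D.
move: (T f1) (T f2) z det_neq0 => [a1 b1] [a2 b2] [z1 z2] /= det.
by congr pair; field; move: det; rewrite mulNr addrC.
Qed.

End onto_R2.

Section closure_map_derivative.
Variable R : realType.
Local Notation mu := (@lebesgue_measure R).
Implicit Types (f g h k u phi : R -> R) (a b p q v y : R) (omega : int).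

Lemma within_continuousM (A : set R) f g :
  {within A, continuous f} -> {within A, continuous g} ->
  {within A, continuous (fun x => f x * g x)}.
Proof. by move=> cf cg x; apply: cvgM; [exact: cf|exact: cg]. Qed.

Lemma within_continuous_comp (A : set R) f (k : R -> R) :
  {within A, continuous f} -> continuous k ->
  {within A, continuous (fun x => k (f x))}.
Proof. by move=> cf ck x; apply: (continuous_comp (cf x)); exact: ck. Qed.

Lemma within_continuous_lincomb (A : set R) f g a b :
  {within A, continuous f} -> {within A, continuous g} ->
  {within A, continuous (fun x => a * f x + b * g x)}.
Proof.
move=> cf cg; apply: within_continuousD; apply: within_continuousM => //;
  exact: cst_continuous.
Qed.

Lemma within01_integrable f :
  {within `[0, 1], continuous f} -> mu.-integrable `[0, 1] (EFin \o f).
Proof.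
by move=> cf; apply: continuous_compact_integrable => //; exact: segment_compact.
Qed.

Lemma Rintegral_lincomb d (T : measurableType d) (nu : {measure set T -> \bar R})
    (D : set T) (f g : T -> R) a b : measurable D ->
  nu.-integrable D (EFin \o f) -> nu.-integrable D (EFin \o g) ->
  Rintegral nu D (fun x => a * f x + b * g x) =
  a * Rintegral nu D f + b * Rintegral nu D g.
Proof.
move=> mD intf intg.
have intZ (k : R) (h : T -> R) : nu.-integrable D (EFin \o h) ->
    nu.-integrable D (EFin \o (fun x => k * h x)).
  by move=> inth; apply: eq_integrable (integrableZl mD k inth).
by rewrite RintegralD ?RintegralZl //; exact: intZ.
Qed.

Lemma Rintegral01_cst a : Rintegral mu `[0, 1] (fun _ => a) = a.
Proof.
have mu01 : fine (mu `[0%R, 1%R]) = 1.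
  by rewrite lebesgue_measure_itv /= lte_fin ltr01 /= subr0.
by rewrite Rintegral_cst // mu01 mulr1.
Qed.

Lemma L2_0_integrable u : L2_0 u -> mu.-integrable `[0, 1] (EFin \o u).
Proof.
rewrite /L2_0 /I01 => -[meas_u [intu2 _]].
apply: (@le_integrable _ _ _ mu _ _ _ (fun x => (1 + u x ^+ 2)%:E)) => //.
- exact/measurable_EFinP.
- move=> x _; rewrite /comp !abse_EFin lee_fin [X in _ <= X]ger0_norm; last first.
    by rewrite addr_ge0 ?sqr_ge0.
  rewrite ler_norml; have := sqr_ge0 (u x - 1); have := sqr_ge0 (u x + 1).
  by rewrite !sqrrD !sqrrN => *; apply/andP; split; nra.
- have int1 := within01_integrable (@cst_continuous _ R (1 : R)).
  exact: eq_integrable (integrableD _ int1 intu2).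
Qed.

Lemma prim0 f : prim f 0 = 0.
Proof. by rewrite /prim set_itv1 Rintegral_set1. Qed.

Lemma within01_continuous_prim f : mu.-integrable `[0, 1] (EFin \o f) ->
  {within `[0, 1], continuous (prim f)}.
Proof. exact: parameterized_integral_continuous. Qed.

Lemma prim_derive f x : {within `[0, 1], continuous f} -> 0 < x < 1 ->
  derivable (prim f) x 1 /\ derive1 (prim f) x = f x.
Proof.
move=> cf /andP[x0 x1].
apply: (continuous_FTC1_closed x1 (within01_integrable cf) x0).
by have [+ _ _] := (continuous_within_itvP f ltr01).1 cf; apply; rewrite in_itv /= x0.
Qed.

Lemma prim_LRcontinuous f : {within `[0, 1], continuous f} ->
  derivable_oo_LRcontinuous (prim f) 0 1.
Proof.
move=> cf; have [_ prim0r prim1l] := (continuous_within_itvP (prim f) ltr01).1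
  (within01_continuous_prim (within01_integrable cf)).
by split => // x; rewrite in_itv /= => /(prim_derive cf)[].
Qed.

Lemma prim_constant_eq0 f (c : R) : {within `[0, 1], continuous f} ->
  (forall y, 0 < y < 1 -> prim f y = c) -> forall x, 0 < x < 1 -> f x = 0.
Proof.
move=> cf primk x x01; have [_ <-] := prim_derive cf x01.
case/andP: x01 => x0 x1.
rewrite derive1E (near_eq_derive (g := cst c)) ?derive_cst //.
near=> y; apply: primk; apply/andP; split.
  by near: y; exact: lt_nbhsr.
by near: y; exact: lt_nbhsl.
Unshelve. all: by end_near. Qed.

Lemma within01_continuous_Pmz f : mu.-integrable `[0, 1] (EFin \o f) ->
  {within `[0, 1], continuous (Pmz f)}.
Proof.
move=> intf; apply: within_continuousB; first exact: within01_continuous_prim.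
exact: cst_continuous.
Qed.

Lemma Rintegral_Pmz f : mu.-integrable `[0, 1] (EFin \o f) ->
  Rintegral mu `[0, 1] (Pmz f) = 0.
Proof.
move=> intf; rewrite RintegralB ?Rintegral01_cst ?subrr //.
- exact/within01_integrable/within01_continuous_prim.
- exact/within01_integrable/cst_continuous.
Qed.

Lemma Pmz_lincomb f g a b s : 0 <= s <= 1 ->
  mu.-integrable `[0, 1] (EFin \o f) -> mu.-integrable `[0, 1] (EFin \o g) ->
  Pmz (fun x => a * f x + b * g x) s = a * Pmz f s + b * Pmz g s.
Proof.
move=> s01 intf intg.
have prim_lincomb t : 0 <= t <= 1 ->
    prim (fun x => a * f x + b * g x) t = a * prim f t + b * prim g t.
  case/andP=> t0 t1; have sub : `[0, t] `<=` `[0, 1] by apply: subset_itvl.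
  have intS k : mu.-integrable `[0, 1] (EFin \o k) ->
      mu.-integrable `[0, t] (EFin \o k).
    exact: (@integrableS _ _ _ mu _ _ _ _ _ sub).
  by apply: Rintegral_lincomb => //; exact: intS.
have int_prim k : mu.-integrable `[0, 1] (EFin \o k) ->
    mu.-integrable `[0, 1] (EFin \o prim k).
  by move=> intk; exact/within01_integrable/within01_continuous_prim.
rewrite /Pmz /I01 prim_lincomb //.
have -> : Rintegral mu `[0, 1] (prim (fun x => a * f x + b * g x)) =
    a * Rintegral mu `[0, 1] (prim f) + b * Rintegral mu `[0, 1] (prim g).
  transitivity (Rintegral mu `[0, 1] (fun t => a * prim f t + b * prim g t)).
    by apply: eq_Rintegral => t /set_mem; rewrite /= in_itv /=; exact: prim_lincomb.
  by apply: Rintegral_lincomb => //; exact: int_prim.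
by rewrite opprD addrACA -!mulrBr.
Qed.

Definition mean0_continuous f :=
  {within `[0, 1], continuous f} /\ Rintegral mu `[0, 1] f = 0.

Lemma Rintegral_Pmz_mul f g : {within `[0, 1], continuous f} ->
  mean0_continuous g ->
  Rintegral mu `[0, 1] (fun s => Pmz f s * g s) =
  Rintegral mu `[0, 1] (fun s => prim f s * g s).
Proof.
move=> cf [cg g0].
have cprim := within01_continuous_prim (within01_integrable cf).
pose c := Rintegral mu (@I01 R) (prim f).
transitivity (Rintegral mu `[0, 1]
    (fun s => 1 * (prim f s * g s) + (- c) * g s)).
  by apply: eq_Rintegral => s _; rewrite /Pmz -/c mul1r mulNr mulrBl.
rewrite Rintegral_lincomb // ?g0 ?mulr0 ?addr0 ?mul1r //.
  exact/within01_integrable/within_continuousM.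
exact: within01_integrable.
Qed.

Lemma Rintegral_Pmz_mul_skew f g : mean0_continuous f -> mean0_continuous g ->
  Rintegral mu `[0, 1] (fun s => Pmz f s * g s) =
  - Rintegral mu `[0, 1] (fun s => Pmz g s * f s).
Proof.
move=> [cf f0] [cg g0].
rewrite !Rintegral_Pmz_mul //.
have Dprim h : {within `[0, 1], continuous h} ->
    {in `]0, 1[, derive1 (prim h) =1 h}.
  by move=> ch x; rewrite in_itv /= => /(prim_derive ch)[].
rewrite (Rintegration_by_parts ltr01 cf (prim_LRcontinuous cf) (Dprim f cf)
  cg (prim_LRcontinuous cg) (Dprim g cg)).
have -> : prim g 1 = 0 by exact: g0.
rewrite prim0 mulr0 mul0r subrr sub0r; congr (- _).
by apply: eq_Rintegral => x _; rewrite mulrC.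
Qed.

Lemma Rintegral01_ge0_eq0 h : {within `[0, 1], continuous h} ->
  (forall x, 0 <= h x) -> Rintegral mu `[0, 1] h = 0 ->
  forall x, 0 < x < 1 -> h x = 0.
Proof.
move=> ch h_ge0 h_int0; apply: (@prim_constant_eq0 _ 0) => // y /andP[y0 y1].
have := @Rintegral_itvB R h (BLeft 0) (BRight 1) y (within01_integrable ch).
rewrite !bnd_simp (ltW y0) (ltW y1) h_int0 => /(_ isT isT) split01.
have : 0 <= Rintegral mu [set` Interval (BRight y) (BRight 1)] h.
  exact: Rintegral_ge0.
have : 0 <= prim h y by exact: Rintegral_ge0.
rewrite -split01 /prim; lra.
Qed.

Lemma within01_continuous_phase omega u : L2_0 u ->
  {within `[0, 1], continuous (phase omega u)}.
Proof.
move=> /L2_0_integrable intu; apply: within_continuousD.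
  by apply: continuous_subspaceT => x; apply: cvgM; [exact: cvg_cst|exact: cvg_id].
exact: within01_continuous_Pmz.
Qed.

Lemma phase1 omega u : L2_0 u ->
  phase omega u 1 = phase omega u 0 + 2 * pi * omega%:~R.
Proof.
case=> _ [_ u0]; rewrite /phase /Pmz prim0.
have -> : prim u 1 = 0 by exact: u0.
ring.
Qed.

Lemma IVT_strict phi v : {within `[0, 1], continuous phi} ->
  (phi 0 < v < phi 1) \/ (phi 1 < v < phi 0) -> exists2 c, 0 < c < 1 & phi c = v.
Proof.
move=> cphi v_between.
have [c] : exists2 c, c \in `[0, 1] & phi c = v.
  apply: IVT => //; case: v_between => /andP[/ltW h1 /ltW h2].
    by rewrite ge_min le_max h1 h2 orbT.
  by rewrite ge_min le_max h1 h2 orbT.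
rewrite in_itv /= => /andP[c0 c1] phic; exists c => //.
rewrite !lt_neqAle c0 c1 !andbT; apply/andP; split; apply/eqP => ce;
  move: v_between; rewrite -phic.
  by rewrite -ce ltxx andbF; case.
by rewrite ce ltxx andbF; case.
Qed.

Lemma cos_sin_lincomb_sqr p q y :
  (q * cos y - p * sin y) ^+ 2 + (q * cos (y + pi / 2) - p * sin (y + pi / 2)) ^+ 2
  = p ^+ 2 + q ^+ 2.
Proof.
rewrite cosDpihalf sinDpihalf -[RHS]mulr1 -(cos2Dsin2 y).
ring.
Qed.

Lemma exists_cos_sin_lincomb_neq0 phi omega p q :
  {within `[0, 1], continuous phi} ->
  phi 1 = phi 0 + 2 * pi * omega%:~R -> omega != 0 -> (p != 0) || (q != 0) ->
  exists2 c, 0 < c < 1 & q * cos (phi c) - p * sin (phi c) != 0.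
Proof.
move=> cphi phi1 omega_neq0 pq_neq0.
have pq2_neq0 : p ^+ 2 + q ^+ 2 != 0.
  by rewrite paddr_eq0 ?sqr_ge0 // !sqrf_eq0 negb_and.
pose between t := (phi 0 < t < phi 1) \/ (phi 1 < t < phi 0).
suff [y y_between y'_between] : exists2 y, between y & between (y + pi / 2).
  move: pq2_neq0; rewrite -(cos_sin_lincomb_sqr p q y).
  have [h_eq0|] := eqVneq (q * cos y - p * sin y) 0; last first.
    by have [c c01 <-] := IVT_strict cphi y_between; exists c.
  have [c c01 <-] := IVT_strict cphi y'_between.
  by rewrite h_eq0 expr0n add0r sqrf_eq0; exists c.
have pi_gt0 := pi_gt0 R; rewrite /between phi1.
case: (ltgtP omega 0) omega_neq0 => [omega_lt0|omega_gt0|->] //= _.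
- have : 1 <= (- omega)%:~R :> R by rewrite ler1z -gtz0_ge1 oppr_gt0.
  rewrite mulrNz => omega_le_m1.
  by exists (phi 0 - pi); right; apply/andP; split; nra.
- have omega_ge1 : 1 <= omega%:~R :> R by rewrite ler1z -gtz0_ge1.
  by exists (phi 0 + pi / 2); left; apply/andP; split; nra.
Qed.

Lemma mean0_continuous_lincomb a b f g :
  mean0_continuous f -> mean0_continuous g -> mean0_continuous (a *: f + b *: g).
Proof.
move=> [cf f0] [cg g0]; split; first exact: within_continuous_lincomb.
rewrite -[a *: f + b *: g]/(fun x => a * f x + b * g x).
by rewrite Rintegral_lincomb ?f0 ?g0 ?mulr0 ?addr0 //; exact: within01_integrable.
Qed.

Lemma mean0_continuous_L2_0 f : mean0_continuous f -> L2_0 f.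
Proof.
move=> [cf f0]; split; first exact: (subspace_continuous_measurable_fun _ cf).
by split => //; exact/within01_integrable/within_continuousM.
Qed.

Lemma Rintegral_mul_Pmz_lincomb h f g a b : {within `[0, 1], continuous h} ->
  {within `[0, 1], continuous f} -> {within `[0, 1], continuous g} ->
  Rintegral mu `[0, 1] (fun s => h s * Pmz (fun x => a * f x + b * g x) s) =
  a * Rintegral mu `[0, 1] (fun s => h s * Pmz f s) +
  b * Rintegral mu `[0, 1] (fun s => h s * Pmz g s).
Proof.
move=> ch cf cg; have cPmz k : {within `[0, 1], continuous k} ->
    {within `[0, 1], continuous (fun s => h s * Pmz k s)}.
  by move=> ck; apply/within_continuousM/within01_continuous_Pmz/within01_integrable.
transitivity (Rintegral mu `[0, 1]
    (fun s => a * (h s * Pmz f s) + b * (h s * Pmz g s))).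
  apply: eq_Rintegral => s /set_mem; rewrite /= in_itv /= => s01.
  rewrite Pmz_lincomb ?within01_integrable //.
  (* Generalizing the atoms keeps [ring] from unfolding the integrals in them. *)
  by move: (h s) (Pmz f s) (Pmz g s) => x y z; ring.
by rewrite Rintegral_lincomb //; exact/within01_integrable/cPmz.
Qed.

Lemma dclosure_lincomb omega u a b f g : L2_0 u ->
  {within `[0, 1], continuous f} -> {within `[0, 1], continuous g} ->
  dclosure_map omega u (a *: f + b *: g) =
  (a * (dclosure_map omega u f).1 + b * (dclosure_map omega u g).1,
   a * (dclosure_map omega u f).2 + b * (dclosure_map omega u g).2).
Proof.
move=> Lu cf cg; rewrite -[a *: f + b *: g]/(fun x => a * f x + b * g x).
have cphase := within01_continuous_phase (omega := omega) Lu.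
have ccos := within_continuous_comp cphase (@continuous_cos R).
have csin := within_continuous_comp cphase (@continuous_sin R).
rewrite /dclosure_map /=; congr pair; last exact: Rintegral_mul_Pmz_lincomb.
by rewrite !mulrN -opprD; congr (- _); exact: Rintegral_mul_Pmz_lincomb.
Qed.

Lemma dclosure_nondegenerate omega u p q : omega != 0 -> L2_0 u ->
  closure_map omega u = (0, 0) -> (p != 0) || (q != 0) ->
  exists2 w, mean0_continuous w &
    p * (dclosure_map omega u w).1 + q * (dclosure_map omega u w).2 != 0.
Proof.
move=> omega_neq0 Lu [int_cos int_sin] pq_neq0.
have cphase := within01_continuous_phase (omega := omega) Lu.
have ccos := within_continuous_comp cphase (@continuous_cos R).
have csin := within_continuous_comp cphase (@continuous_sin R).
set ph := phase omega u in cphase ccos csin int_cos int_sin *.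
pose g s := q * cos (ph s) + (- p) * sin (ph s).
have g_mean0 : mean0_continuous g.
  split; first exact: within_continuous_lincomb.
  rewrite Rintegral_lincomb ?int_cos ?int_sin ?mulr0 ?addr0 //;
    exact: within01_integrable.
have intg := within01_integrable g_mean0.1.
pose w := Pmz g.
have w_mean0 : mean0_continuous w.
  by split; [exact: within01_continuous_Pmz|exact: Rintegral_Pmz].
exists w => //.
have cPw := within01_continuous_Pmz (within01_integrable w_mean0.1).
have int_mul_Pw k : {within `[0, 1], continuous k} ->
    mu.-integrable `[0, 1] (EFin \o (fun s => k s * Pmz w s)).
  by move=> ck; exact/within01_integrable/within_continuousM.
have -> : p * (dclosure_map omega u w).1 + q * (dclosure_map omega u w).2 =
    Rintegral mu `[0, 1] (fun s => Pmz w s * g s).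
  transitivity (Rintegral mu `[0, 1]
    (fun s => q * (cos (ph s) * Pmz w s) + (- p) * (sin (ph s) * Pmz w s))).
    rewrite Rintegral_lincomb ?int_mul_Pw //.
    by rewrite /dclosure_map /I01 /= mulrN mulNr addrC.
  apply: eq_Rintegral => s _; rewrite /g.
  by move: (Pmz w s) (cos (ph s)) (sin (ph s)) => x y z; ring.
rewrite (Rintegral_Pmz_mul_skew w_mean0 g_mean0) oppr_eq0 -/w.
apply/negP => /eqP ww_int0.
have ww_ge0 s : 0 <= w s * w s by rewrite -expr2 sqr_ge0.
have ww_eq0 := Rintegral01_ge0_eq0 (within_continuousM w_mean0.1 w_mean0.1)
  ww_ge0 ww_int0.
have w_eq0 x : 0 < x < 1 -> w x = 0.
  move=> x01; apply/eqP; rewrite -[_ == 0]orbb -mulf_eq0.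
  by apply/eqP; exact: ww_eq0.
have g_eq0 : forall x, 0 < x < 1 -> g x = 0.
  apply: (@prim_constant_eq0 g (Rintegral mu (@I01 R) (prim g)) g_mean0.1).
  by move=> y y01; apply/eqP; rewrite -subr_eq0; apply/eqP; exact: w_eq0.
have [c c01] := exists_cos_sin_lincomb_neq0 cphase (phase1 omega Lu)
  omega_neq0 pq_neq0.
by rewrite -/ph -mulNr -/(g c) g_eq0 ?eqxx.
Qed.

End closure_map_derivative.

Theorem mainTheorem9 (R : realType) (omega : int) (u : R -> R) :
  omega != 0 -> L2_0 u -> closure_map omega u = (0, 0) ->
  forall z : R * R, exists w : R -> R, L2_0 w /\ dclosure_map omega u w = z.
Proof.
move=> omega_neq0 Lu closed z.
have [w w_mean0 <-] := onto_R2 (@mean0_continuous_lincomb R)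
  (fun a b _ _ Sf Sg => dclosure_lincomb omega a b Lu Sf.1 Sg.1)
  (fun _ _ => dclosure_nondegenerate omega_neq0 Lu closed) z.
by exists w; split => //; exact: mean0_continuous_L2_0.
Qed.
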